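(* Let $\mu$ be a finite signed Borel measure on a Borel set $C\subseteq\mathbb{R}$, let $\alpha\in\mathbb{R}$ and let $g$ be a complex-valued function on $C$; for each $z$ fix a value $g(z)^\alpha\in\mathbb{C}$ and put $r(k,z)=g(z)^{\alpha k}:=(g(z)^\alpha)^k$. Suppose $\phi:\mathbb{N}\cup\{0\}\to\mathbb{C}$ satisfies $\phi(k)=\int_C r(k,z)\,\mu(dz)$ for all $k\in\mathbb{N}\cup\{0\}$. Let $\gamma,\sigma:[a,b]\to V$ be continuous paths of bounded variation and set $a_k(s,t)=\langle S(\gamma)^k_{a,s},S(\sigma)^k_{a,t}\rangle_k$. Assume that for every $(s,t)\in[a,b]^2$: (1) $\int_C|r(k,z)|\,|\mu|(dz)<\infty$ for every $k$, and (2) the series $\sum_k a_k(s,t)\int_C|r(k,z)|\,|\mu|(dz)$ converges absolutely. Then for every $(s,t)\in[a,b]^2$, \[ \langle S(\gamma)_{a,s},S(\sigma)_{a,t}\rangle_\phi=\int_C K^{g(z)^\alpha\gamma,\sigma}(s,t)\,\mu(dz). \]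
   Context: $V$ is a finite-dimensional real inner product space, $\langle\cdot,\cdot\rangle_k$ the induced Hilbert–Schmidt inner product on $V^{\otimes k}$. Signature: $S(\gamma)^0=1$, $S(\gamma)^k_{s,t}=\int_{s<u_1<\dots<u_k<t}d\gamma_{u_1}\otimes\cdots\otimes d\gamma_{u_k}$. For complex $\phi$, $\langle S(\gamma)_{a,s},S(\sigma)_{a,t}\rangle_\phi:=\sum_{k\ge0}\phi(k)a_k(s,t)$. For $w\in\mathbb{C}$, the (original) signature kernel of the rescaled path is $K^{w\gamma,\sigma}(s,t):=\sum_{k\ge0}w^k a_k(s,t)$. $|\mu|$ denotes the total variation measure. *)

From HB Require Import structures.
From mathcomp Require Import all_boot all_order all_algebra.
From mathcomp Require Import all_classical all_reals all_analysis.
From mathcomp Require Import complex.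
Set Implicit Arguments. Unset Strict Implicit. Unset Printing Implicit Defensive.
Import Order.TTheory GRing.Theory Num.Theory.
Import numFieldNormedType.Exports.
Local Open Scope classical_set_scope.
Local Open Scope ring_scope.

(* Riemann–Stieltjes integral  \int_a^b f(u) dg(u)  (limit of Riemann–       *)
(* Stieltjes sums over tagged partitions a = x_0 <= ... <= x_n = b as the     *)
(* mesh tends to 0); RSint returns this limit (and 0 if it does not exist).  *)
Section RiemannStieltjes.
Variable R : realType.

Definition is_RS (f g : R -> R) (a b I : R) : Prop :=
  forall e : R, 0 < e -> exists2 delta : R, 0 < delta &
    forall (n : nat) (x xi : nat -> R),
      x 0%N = a -> x n = b ->
      (forall i : nat, (i < n)%N ->
         (x i <= xi i <= x i.+1) /\ x i.+1 - x i < delta) ->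
      `| \sum_(i < n) f (xi i) * (g (x i.+1) - g (x i)) - I | < e.

Definition RSint (f g : R -> R) (a b : R) : R :=
  xget 0 [set I | is_RS f g a b I].

End RiemannStieltjes.

(* Signatures of paths in V = R^d (standard inner product).                 *)
(* sigcoef gamma a w t = coefficient of e_{w_1} (x) ... (x) e_{w_k} in       *)
(*   S(gamma)^k_{a,t} = \int_{a<u_1<...<u_k<t} dgamma_{u_1} (x)...(x) dgamma_{u_k},*)
(* computed as the iterated Riemann–Stieltjes integral                        *)
(*   S^{k}_{a,t}(w_1..w_k) = \int_a^t S^{k-1}_{a,u}(w_1..w_{k-1}) dgamma^{w_k}_u. *)
Section Signature.
Variables (R : realType) (d : nat).

Fixpoint sig_rev (gamma : R -> 'rV[R]_d) (a : R) (w : seq 'I_d) (t : R) : R :=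
  match w with
  | [::] => 1
  | i :: w' => RSint (sig_rev gamma a w') (fun u => gamma u ord0 i) a t
  end.

Definition sigcoef (gamma : R -> 'rV[R]_d) (a : R) (w : seq 'I_d) (t : R) : R :=
  sig_rev gamma a (rev w) t.

(* a_k(s,t) = < S(gamma)^k_{a,s}, S(sigma)^k_{a,t} >_k  (Hilbert–Schmidt)   *)
Definition sig_dot (gamma sigma : R -> 'rV[R]_d) (a : R) (k : nat) (s t : R) : R :=
  \sum_(w : k.-tuple 'I_d) sigcoef gamma a w s * sigcoef sigma a w t.

Definition csum (u : nat -> R[i]) : R[i] :=
  ((limn (fun n => \sum_(0 <= k < n) complex.Re (u k))) +i*
   (limn (fun n => \sum_(0 <= k < n) complex.Im (u k))))%C.

Definition phi_kernel (phi : nat -> R[i]) (gamma sigma : R -> 'rV[R]_d)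
  (a s t : R) : R[i] :=
  csum (fun k => phi k * (sig_dot gamma sigma a k s t)%:C%C).

Definition sigK (w : R[i]) (gamma sigma : R -> 'rV[R]_d) (a s t : R) : R[i] :=
  csum (fun k => w ^+ k * (sig_dot gamma sigma a k s t)%:C%C).

End Signature.

(* Integration against a finite signed measure (charge): Jordan decomposition*)
(* obtained from a (chosen) Hahn decomposition; |mu| = charge_variation.     *)
Section ChargeIntegral.
Context d (T : measurableType d) (R : realType).

Lemma ex_hahn_pair (nu : {charge set T -> \bar R}) :
  exists PN : set T * set T, hahn_decomposition nu PN.1 PN.2.
Proof. by have [P [N PN]] := Hahn_decomposition nu; exists (P, N). Qed.

Definition hahn_pair (nu : {charge set T -> \bar R}) : set T * set T :=
  projT1 (cid (ex_hahn_pair nu)).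

Definition hahn_pairP (nu : {charge set T -> \bar R}) :
  hahn_decomposition nu (hahn_pair nu).1 (hahn_pair nu).2 :=
  projT2 (cid (ex_hahn_pair nu)).

Definition cpos (nu : {charge set T -> \bar R}) := jordan_pos (hahn_pairP nu).
Definition cneg (nu : {charge set T -> \bar R}) := jordan_neg (hahn_pairP nu).
Definition cvar (nu : {charge set T -> \bar R}) := charge_variation (hahn_pairP nu).

Definition charge_int (nu : {charge set T -> \bar R}) (D : set T) (f : T -> R)
  : \bar R :=
  (\int[cpos nu]_(x in D) (f x)%:E - \int[cneg nu]_(x in D) (f x)%:E)%E.

Definition charge_cint (nu : {charge set T -> \bar R}) (D : set T) (f : T -> R[i])
  : R[i] :=
  (fine (charge_int nu D (fun x => complex.Re (f x))) +i*
   fine (charge_int nu D (fun x => complex.Im (f x))))%C.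

Definition charge_absint (nu : {charge set T -> \bar R}) (D : set T) (f : T -> R)
  : \bar R := \int[cvar nu]_(x in D) (f x)%:E.

End ChargeIntegral.

(* For fixed (s, t) the a_k(s, t) are just real coefficients, so the
   hypotheses on the paths play no role: the claim is an interchange of
   \sum_k and \int_C.  Split mu into its Jordan parts and the integrand into
   real and imaginary parts.  On each piece the partial sums of
   \sum_k a_k(s, t) Re (g(z)^{alpha k}) are dominated by
   G(z) = \sum_k |a_k(s, t)| |g(z)^{alpha k}|, whose integral is, by monotone
   convergence, the series of hypothesis (2); dominated convergence then lets
   the limit pass through the integral. *)

From HB Require Import structures.
From mathcomp Require Import all_boot all_order all_algebra.
From mathcomp Require Import all_classical all_reals all_analysis.
From mathcomp Require Import complex measurable_realfun ring.
Set Implicit Arguments. Unset Strict Implicit.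
Unset Printing Implicit Defensive.
Import Order.TTheory GRing.Theory Num.Theory.
Import numFieldNormedType.Exports.
Local Open Scope classical_set_scope.
Local Open Scope ring_scope.

Local Notation normc := ComplexField.Normc.normc.

Section MeasurableLimit.
Context d (T : measurableType d) (R : realType).

Lemma cvgn_cauchyP (u : R^nat) : cvgn u <->
  forall m : nat, exists N : nat, forall p q, (N <= p)%N -> (N <= q)%N ->
    `|u p - u q| < m.+1%:R^-1.
Proof.
split.
  move=> /cvg_ex [l /cvgrPdist_lt ul] m.
  have e2 : 0 < m.+1%:R^-1 / 2 :> R by rewrite divr_gt0 // invr_gt0 ltr0n.
  have [N _ HN] := ul _ e2.
  exists N => p q Np Nq.
  rewrite (_ : u p - u q = (l - u q) - (l - u p)); last by ring.
  rewrite (le_lt_trans (ler_normB _ _)) // [X in _ < X](splitr (m.+1%:R^-1)).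
  by rewrite ltrD // HN.
move=> uC; apply/cauchy_cvgP/cauchy_exP => e e0.
have [N HN] := uC (Num.Def.truncn e^-1).
exists (u N), N => // n /= Nn.
rewrite /ball /= (lt_trans (HN N n (leqnn N) Nn)) //.
rewrite -[X in _ < X](invrK e) ltf_pV2 ?posrE ?ltr0n ?invr_gt0 //.
exact: truncnS_gt.
Qed.

Lemma measurable_cvgn_set (D : set T) (S : (T -> R)^nat) :
  measurable D -> (forall n, measurable_fun D (S n)) ->
  measurable (D `&` [set z | cvgn (S ^~ z)]).
Proof.
move=> mD mS.
pose close m p q := D `&` [set z | `|S p z - S q z| < m.+1%:R^-1].
have mclose m p q : measurable (close m p q).
  rewrite (_ : close m p q =
      D `&` (fun z => `|S p z - S q z|) @^-1` `]-oo, m.+1%:R^-1[).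
    have mdist : measurable_fun D (fun z => `|S p z - S q z|).
      exact: measurableT_comp (measurable_funB (mS p) (mS q)).
    exact: mdist mD _ (measurable_itv _).
  by apply/seteqP; split => z /= [Dz]; rewrite in_itv.
rewrite (_ : _ `&` _ = \bigcap_m \bigcup_N
    \bigcap_(p in [set p | (N <= p)%N]) \bigcap_(q in [set q | (N <= q)%N])
      close m p q).
  apply: bigcapT_measurable => m; apply: bigcupT_measurable => N.
  apply: bigcap_measurable => [|p _]; first by exists N => /=.
  by apply: bigcap_measurable => [|q _]; [exists N => /=|exact: mclose].
apply/seteqP; split => z /=.
  move=> [Dz /cvgn_cauchyP zC] m _; have [N HN] := zC m.
  by exists N => // p Np q Nq; split => //; apply: HN.
move=> zC; split.
  by have [N _ /(_ N (leqnn N)) /(_ N (leqnn N)) []] := zC 0%N I.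
apply/cvgn_cauchyP => m; have [N _ HN] := zC m I.
by exists N => p q Np Nq; have [] := HN p Np q Nq.
Qed.

Lemma measurable_limn (D : set T) (S : (T -> R)^nat) :
  measurable D -> (forall n, measurable_fun D (S n)) ->
  measurable_fun D (fun z => limn (S ^~ z)).
Proof.
move=> mD mS; have mDS := measurable_cvgn_set mD mS.
rewrite -(setDUK (@subIsetl _ D [set z | cvgn (S ^~ z)])).
apply/measurable_funU => //; first exact: measurableD.
split.
  apply: (@measurable_fun_cvg _ _ _ _ S) => [n|z [_ /= //]].
  exact: measurable_funS mD _ (mS n).
(* Off the convergence set, [limn] is the junk value [point]. *)
apply: (eq_measurable_fun (cst point)); last exact: measurable_cst.
by move=> z; rewrite inE => -[Dz /= zD]; rewrite dvgP // => zC; apply: zD.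
Qed.

End MeasurableLimit.

Local Open Scope ereal_scope.

Section DominatedSeries.
Context d (T : measurableType d) (R : realType).
Variables (m : {measure set T -> \bar R}) (D : set T) (h B : nat -> T -> R).
Variable c : nat -> R.
Hypotheses (mD : measurable D) (mh : forall k, measurable_fun D (h k))
  (mB : forall k, measurable_fun D (B k))
  (hB : forall k z, D z -> (`|h k z| <= B k z)%R)
  (iB : forall k, \int[m]_(z in D) (B k z)%:E < +oo)
  (sB : \sum_(0 <= k <oo) ((`|c k|)%:E * \int[m]_(z in D) (B k z)%:E) < +oo).

Let B_ge0 k z : D z -> (0 <= B k z)%R.
Proof. by move=> Dz; exact: le_trans (normr_ge0 _) (hB k Dz). Qed.

Let cB_ge0 k z : D z -> 0 <= (`|c k| * B k z)%:E.
Proof. by move=> Dz; rewrite lee_fin mulr_ge0 // B_ge0. Qed.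

Let mcB k : measurable_fun D (fun z => (`|c k| * B k z)%:E).
Proof. exact/measurable_EFinP/(measurable_funM (measurable_cst _) (mB k)). Qed.

Lemma integrable_dominated_term k : m.-integrable D (EFin \o h k).
Proof.
have intB : m.-integrable D (EFin \o B k).
  apply/integrableP; split; first exact/measurable_EFinP.
  rewrite (eq_integral (fun z => (B k z)%:E)) //.
  by move=> z /[!inE] Dz /=; rewrite ger0_norm // B_ge0.
apply: (le_integrable mD _ _ intB); first exact/measurable_EFinP.
by move=> z Dz /=; rewrite lee_fin (ger0_norm (B_ge0 k Dz)); exact: hB.
Qed.

Let majorant z := \sum_(0 <= k <oo) (`|c k| * B k z)%:E.

Let integrable_majorant : m.-integrable D majorant.
Proof.
have maj_ge0 z : D z -> 0 <= majorant z.
  by move=> Dz; apply: nneseries_ge0 => k _ _; exact: cB_ge0.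
have mmaj : measurable_fun D majorant.
  apply: (ge0_emeasurable_sum (P := predT)) => [k z Dz _|k _].
    exact: cB_ge0.
  exact: mcB.
apply/integrableP; split => //.
rewrite (eq_integral majorant); last first.
  by move=> z /[!inE] Dz; rewrite gee0_abs // maj_ge0.
rewrite integral_nneseries //.
suff -> : \sum_(0 <= k <oo) \int[m]_(z in D) (`|c k| * B k z)%:E =
          \sum_(0 <= k <oo) ((`|c k|)%:E * \int[m]_(z in D) (B k z)%:E) by [].
apply: eq_eseriesr => k _; under eq_integral do rewrite EFinM.
by rewrite ge0_integralZl_EFin // => [z Dz|]; [rewrite lee_fin B_ge0|
  exact/measurable_EFinP].
Qed.

Let partial n z := (\sum_(0 <= k < n) h k z * c k)%R.

Let partial_le_majorant n z : D z -> `|(partial n z)%:E| <= majorant z.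
Proof.
move=> Dz; apply: (@le_trans _ _ (\sum_(0 <= k < n) (`|c k| * B k z)%:E)).
  rewrite sumEFin lee_fin; apply: le_trans (ler_norm_sum _ _ _) _.
  by apply: ler_sum => k _; rewrite normrM mulrC ler_wpM2l // hB.
by apply: nneseries_lim_ge => k _ _; exact: cB_ge0.
Qed.

(* Where the majorant is finite the series converges absolutely. *)
Let cvgn_partial_ae :
  {ae m, forall z, D z -> (partial n z)%:E @[n --> \oo] -->
                          (limn (partial ^~ z))%:E}.
Proof.
apply: filterS (integrable_ae mD integrable_majorant) => z majz Dz.
have zC : cvgn (partial ^~ z).
  apply/normed_cvg/(@series_le_cvg _ _ (fun k => `|c k| * B k z)%R).
  - by move=> k; exact: normr_ge0.
  - by move=> k; rewrite mulr_ge0 // B_ge0.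
  - by move=> k; rewrite /= normrM mulrC ler_wpM2l // hB.
  apply: nnseries_is_cvg; first by move=> k; rewrite mulr_ge0 // B_ge0.
  rewrite -ge0_fin_numE ?majz //.
  by apply: nneseries_ge0 => k _ _; exact: cB_ge0.
by apply/fine_cvgP; split; [exact: nearW|exact: zC].
Qed.

Let integral_partial n : \int[m]_(z in D) (partial n z)%:E =
  (\sum_(0 <= k < n) fine (\int[m]_(z in D) (h k z)%:E) * c k)%R%:E.
Proof.
under eq_integral do rewrite -sumEFin.
rewrite (integral_sum mD (f := fun k z => (h k z * c k)%:E)); last first.
  move=> k; under eq_fun do rewrite EFinM.
  exact: (integrableZr mD (c k) (integrable_dominated_term k)).
rewrite -sumEFin; apply: eq_bigr => k _; under eq_integral do rewrite EFinM.
rewrite integralZr //; last exact: integrable_dominated_term.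
have fin_k := integrable_fin_num mD (integrable_dominated_term k).
by rewrite -[in LHS](fineK fin_k).
Qed.

Let dominated_partial :
  m.-integrable D (EFin \o fun z => limn (partial ^~ z)) /\
  \int[m]_(z in D) (partial n z)%:E @[n --> \oo] -->
    \int[m]_(z in D) (limn (partial ^~ z))%:E.
Proof.
have mpartial n : measurable_fun D (partial n).
  by apply: measurable_sum => k; exact: measurable_funM.
have [ilim _ cvg_int] := dominated_convergence mD
  (fun n => (measurable_EFinP _ _).2 (mpartial n))
  ((measurable_EFinP _ _).2 (measurable_limn mD mpartial)) cvgn_partial_ae
  integrable_majorant (aeW _ (fun z n Dz => partial_le_majorant n Dz)).
by split.
Qed.

Lemma integrable_limn_series : m.-integrable D
  (EFin \o fun z => limn (fun n => \sum_(0 <= k < n) h k z * c k)%R).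
Proof. by case: dominated_partial. Qed.

Lemma cvg_integral_series :
  (\sum_(0 <= k < n) fine (\int[m]_(z in D) (h k z)%:E) * c k)%R @[n --> \oo]
  --> fine (\int[m]_(z in D)
              (limn (fun n => \sum_(0 <= k < n) h k z * c k)%R)%:E).
Proof.
have [ilim] := dominated_partial.
rewrite -(fineK (integrable_fin_num mD ilim)).
under eq_fun do rewrite integral_partial.
by move/fine_cvgP => [].
Qed.

End DominatedSeries.

Section ChargeSeries.
Context d (T : measurableType d) (R : realType).
Variables (mu : {charge set T -> \bar R}) (C : set T).

Lemma charge_absintE (f : T -> R) : measurable C -> measurable_fun C f ->
  (forall z, C z -> (0 <= f z)%R) ->
  charge_absint mu C f =
    \int[cpos mu]_(z in C) (f z)%:E + \int[cneg mu]_(z in C) (f z)%:E.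
Proof.
move=> mC mf f_ge0.
rewrite /charge_absint (eq_measure_integral (measure_add (cpos mu) (cneg mu))).
  by rewrite ge0_integral_measure_add //; exact/measurable_EFinP.
by move=> A mA _; symmetry; exact: measure_addE.
Qed.

Variables (h B : nat -> T -> R) (c : nat -> R).
Hypotheses (mC : measurable C) (mh : forall k, measurable_fun C (h k))
  (mB : forall k, measurable_fun C (B k))
  (hB : forall k z, C z -> (`|h k z| <= B k z)%R)
  (iB : forall k, charge_absint mu C (B k) < +oo)
  (sB : \sum_(0 <= k <oo) ((`|c k|)%:E * charge_absint mu C (B k)) < +oo).

Let B_ge0 k z : C z -> (0 <= B k z)%R.
Proof. by move=> Cz; exact: le_trans (normr_ge0 _) (hB k Cz). Qed.

Let absint_bounds (nu : {measure set T -> \bar R}) :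
  (forall k, \int[nu]_(z in C) (B k z)%:E <= charge_absint mu C (B k)) ->
  (forall k, \int[nu]_(z in C) (B k z)%:E < +oo) /\
  \sum_(0 <= k <oo) ((`|c k|)%:E * \int[nu]_(z in C) (B k z)%:E) < +oo.
Proof.
move=> le_nu; split=> [k|]; first exact: le_lt_trans (iB k).
apply: le_lt_trans sB; apply: lee_nneseries => k _.
  by rewrite mule_ge0 // integral_ge0 // => z Cz; rewrite lee_fin B_ge0.
by rewrite lee_wpmul2l ?lee_fin.
Qed.

Let intB_ge0 (nu : {measure set T -> \bar R}) k :
  0 <= \int[nu]_(z in C) (B k z)%:E.
Proof. by apply: integral_ge0 => z Cz; rewrite lee_fin B_ge0. Qed.

Lemma charge_int_series :
  limn (fun n => \sum_(0 <= k < n) fine (charge_int mu C (h k)) * c k)%R =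
  fine (charge_int mu C
          (fun z => limn (fun n => \sum_(0 <= k < n) h k z * c k)%R)).
Proof.
have absintE k := charge_absintE mC (mB k) (@B_ge0 k).
have le_pos k : \int[cpos mu]_(z in C) (B k z)%:E <= charge_absint mu C (B k).
  by rewrite absintE leeDl ?intB_ge0.
have le_neg k : \int[cneg mu]_(z in C) (B k z)%:E <= charge_absint mu C (B k).
  by rewrite absintE leeDr ?intB_ge0.
have [iBp sBp] := absint_bounds le_pos.
have [iBn sBn] := absint_bounds le_neg.
have finp k := integrable_fin_num mC
  (integrable_dominated_term mC mh mB hB iBp k).
have finn k := integrable_fin_num mC
  (integrable_dominated_term mC mh mB hB iBn k).
rewrite /charge_int fineB; last 2 first.
- apply: (integrable_fin_num mC).
  exact: (integrable_limn_series mC mh mB hB sBp).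
- apply: (integrable_fin_num mC).
  exact: (integrable_limn_series mC mh mB hB sBn).
have cvg_pos := cvg_integral_series mC mh mB hB iBp sBp.
have cvg_neg := cvg_integral_series mC mh mB hB iBn sBn.
rewrite -(cvg_lim _ (cvgB cvg_pos cvg_neg)) //; congr (lim (_ @ \oo)).
apply/funext => n; rewrite fctE -sumrB; apply: eq_bigr => k _.
by rewrite fineB ?mulrBl ?finp ?finn.
Qed.

End ChargeSeries.

Local Close Scope ereal_scope.

Section ComplexParts.
Variable R : rcfType.

Lemma Re_mul_real (w : R[i]) (r : R) :
  complex.Re (w * r%:C%C) = complex.Re w * r.
Proof. by case: w => x y /=; rewrite mulr0 subr0. Qed.

Lemma Im_mul_real (w : R[i]) (r : R) :
  complex.Im (w * r%:C%C) = complex.Im w * r.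
Proof. by case: w => x y /=; rewrite mulr0 add0r. Qed.

Lemma abs_Re_le_normc (w : R[i]) : `|complex.Re w| <= normc w.
Proof.
by case: w => x y /=; rewrite -sqrtr_sqr ler_wsqrtr // lerDl sqr_ge0.
Qed.

Lemma abs_Im_le_normc (w : R[i]) : `|complex.Im w| <= normc w.
Proof.
by case: w => x y /=; rewrite -sqrtr_sqr ler_wsqrtr // lerDr sqr_ge0.
Qed.

End ComplexParts.

Section MeasurableComplex.
Context d (T : measurableType d) (R : realType) (D : set T) (g : T -> R[i]).
Hypotheses (mRe : measurable_fun D (fun z => complex.Re (g z)))
  (mIm : measurable_fun D (fun z => complex.Im (g z))).

Lemma measurable_fun_normc :
  measurable_fun D (fun z => normc (g z)).
Proof.
rewrite (_ : (fun z => _) = Num.sqrt \o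
    (fun z => complex.Re (g z) ^+ 2 + complex.Im (g z) ^+ 2)).
  apply: measurableT_comp.
    exact: (continuous_measurable_fun (@sqrt_continuous R)).
  by apply: measurable_funD; apply: measurable_funM.
by apply/funext => z /=; case: (g z).
Qed.

Lemma measurable_fun_Re_Im_expr k :
  measurable_fun D (fun z => complex.Re (g z ^+ k)) /\
  measurable_fun D (fun z => complex.Im (g z ^+ k)).
Proof.
elim: k => [|k [mRek mImk]].
  by split; under eq_fun do rewrite expr0; exact: measurable_cst.
under [X in measurable_fun D X /\ _]eq_fun do rewrite exprS.
under [X in _ /\ measurable_fun D X]eq_fun do rewrite exprS.
split.
  rewrite (_ : (fun z => _) = fun z =>
      complex.Re (g z) * complex.Re (g z ^+ k) -
      complex.Im (g z) * complex.Im (g z ^+ k)).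
    by apply: measurable_funB; apply: measurable_funM.
  by apply/funext => z; case: (g z ^+ k) => ? ?; case: (g z).
rewrite (_ : (fun z => _) = fun z =>
    complex.Re (g z) * complex.Im (g z ^+ k) +
    complex.Im (g z) * complex.Re (g z ^+ k)).
  by apply: measurable_funD; apply: measurable_funM.
by apply/funext => z; case: (g z ^+ k) => ? ?; case: (g z).
Qed.

End MeasurableComplex.

Lemma charge_int_part_series d (T : measurableType d) (R : realType)
    (mu : {charge set T -> \bar R}) (C : set T) (g : T -> R[i]) (c : nat -> R)
    (p : R[i] -> R) :
  measurable C ->
  (forall w r, p (w * r%:C%C) = p w * r) ->
  (forall w, `|p w| <= normc w) ->
  (forall k, measurable_fun C (fun z => p (g z ^+ k))) ->
  (forall k, measurable_fun C (fun z => normc (g z ^+ k))) ->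
  (forall k,
     (charge_absint mu C (fun z => normc (g z ^+ k)%R) < +oo)%E) ->
  (\sum_(0 <= k <oo) ((`|c k|)%:E *
     charge_absint mu C (fun z => normc (g z ^+ k)%R)) < +oo)%E ->
  limn (fun n => \sum_(0 <= k < n)
                   fine (charge_int mu C (fun z => p (g z ^+ k))) * c k) =
  fine (charge_int mu C (fun z =>
    limn (fun n => \sum_(0 <= k < n) p (g z ^+ k * (c k)%:C%C)))).
Proof.
move=> mC pM p_le mp mnorm iB sB.
rewrite [in RHS](_ : (fun z => _) = fun z =>
    limn (fun n => \sum_(0 <= k < n) p (g z ^+ k) * c k)).
  exact: charge_int_series mC mp mnorm (fun k z _ => p_le _) iB sB.
by apply/funext => z; under eq_fun do under eq_bigr do rewrite pM.
Qed.

Theorem mainTheorem3 (R : realType) (d : nat)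
  (mu : {charge set R -> \bar R}) (C : set R) (gpow : R -> R[i])
  (phi : nat -> R[i]) (a b : R) (gamma sigma : R -> 'rV[R]_d) :
  measurable C ->
  measurable_fun C (fun z => complex.Re (gpow z)) ->
  measurable_fun C (fun z => complex.Im (gpow z)) ->
  (forall k : nat, phi k = charge_cint mu C (fun z => gpow z ^+ k)) ->
  (forall i : 'I_d, {within `[a, b], continuous (fun u => gamma u ord0 i)}) ->
  (forall i : 'I_d, bounded_variation a b (fun u => gamma u ord0 i)) ->
  (forall i : 'I_d, {within `[a, b], continuous (fun u => sigma u ord0 i)}) ->
  (forall i : 'I_d, bounded_variation a b (fun u => sigma u ord0 i)) ->
  (forall s t : R, s \in `[a, b] -> t \in `[a, b] ->
     (forall k : nat,
        (charge_absint mu C (fun z => ComplexField.Normc.normc (gpow z ^+ k)%R)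
          < +oo)%E) /\
     (\sum_(0 <= k <oo)
        ((`| sig_dot gamma sigma a k s t |)%:E *
         charge_absint mu C (fun z => ComplexField.Normc.normc (gpow z ^+ k)%R))
       < +oo)%E) ->
  forall s t : R, s \in `[a, b] -> t \in `[a, b] ->
    phi_kernel phi gamma sigma a s t =
    charge_cint mu C (fun z => sigK (gpow z) gamma sigma a s t).
Proof.
move=> mC mRe mIm phiE _ _ _ _ summable s t sab tab.
have [iB sB] := summable s t sab tab.
have mpow k := measurable_fun_Re_Im_expr mRe mIm k.
have mnorm k := measurable_fun_normc (mpow k).1 (mpow k).2.
rewrite /phi_kernel /csum /charge_cint; congr (_ +i* _)%C.
- under eq_fun do under eq_bigr do rewrite Re_mul_real phiE.
  exact: charge_int_part_series mC (@Re_mul_real R) (@abs_Re_le_normc R)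
    (fun k => (mpow k).1) mnorm iB sB.
- under eq_fun do under eq_bigr do rewrite Im_mul_real phiE.
  exact: charge_int_part_series mC (@Im_mul_real R) (@abs_Im_le_normc R)
    (fun k => (mpow k).2) mnorm iB sB.
Qed.
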